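(* Let $p$ be an odd prime, $n\ge1$, $G=\mu_{p^n}$ and let $\mathcal{P}$ be a unital partition of $G$ satisfying condition (p). Let $0\le k\le n-1$, fix $A\in\mathcal{P}_k$ and a generator $x$ of $G$ with $y:=x^{p^k}\in A$, and let $b_k$ be the integer with $u_k=\phi(p^{b_k})$. Then for every integer $i$, $$A_{i,k}=\{x^{p^k(\alpha^i+sp^{b_k})}\mid s=0,1,\dots,p^{n-k-b_k}-1\}.$$
   Context: A unital partition of a finite commutative group $G$ is a partition $G=\{1\}\sqcup A_0\sqcup\dots\sqcup A_s$ such that, with $a_i=\sum_{x\in A_i}x\in\mathbb{Z}[G]$, the $\mathbb{Z}$-span of $1$ and the $a_i$ is closed under multiplication in $\mathbb{Z}[G]$. Condition (p): $|B|$ is a power of $p$ for every $B\in\mathcal{P}$. $B_k=\{x^{p^k}\mid x\text{ a generator of }G\}$, $\mathcal{P}_k=\{B\in\mathcal{P}\mid B\cap B_k\neq\emptyset\}$. Fix an integer $\alpha$ generating $(\mathbb{Z}/p^n\mathbb{Z})^\times$; $u_k$ is the smallest positive integer with $y^{\alpha^{u_k}}\in A$; under (p) one has $u_k=\phi(p^{b_k})$ with $1\le b_k\le n-k$. For $X\subseteq G$, $X^m=\{z^m:z\in X\}$, and $A_{i,k}:=A^{\alpha^i}$. *)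

From HB Require Import structures.
From mathcomp Require Import all_boot all_order all_algebra all_fingroup all_solvable.
Set Implicit Arguments. Unset Strict Implicit. Unset Printing Implicit Defensive.
Import GRing.Theory.

Section UnitalPartition.
Variable gT : finGroupType.

(* coefficient of z in the product (sum_{u in B} u)(sum_{v in C} v) in Z[G] *)
Definition grp_coef (B C : {set gT}) (z : gT) : nat :=
  #|[set uv in setX B C | (uv.1 * uv.2)%g == z]|.

(* P is a unital partition of G: a partition of G having {1} as a block, such
   that the Z-span of the block sums is closed under multiplication in Z[G]. *)
Definition unital_partition (G : {set gT}) (P : {set {set gT}}) : Prop :=
  [/\ partition P G, [set 1%g] \in P &
    forall B C, B \in P -> C \in P ->
      exists c : {set gT} -> int, forall z : gT,
        Posz (grp_coef B C z) = (\sum_(D in P) c D * Posz (z \in D))%R].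

Definition cond_p (p : nat) (P : {set {set gT}}) : Prop :=
  forall B, B \in P -> exists e, #|B| = (p ^ e)%N.

Definition Bset (G : {set gT}) (p k : nat) : {set gT} :=
  [set (z ^+ (p ^ k))%g | z in [set g in G | generator G g]].

Definition Pset (G : {set gT}) (P : {set {set gT}}) (p k : nat) : {set {set gT}} :=
  [set B in P | B :&: Bset G p k != set0].

Definition set_pow (X : {set gT}) (m : nat) : {set gT} := [set (z ^+ m)%g | z in X].

End UnitalPartition.

Definition generates_units (N alpha : nat) : Prop :=
  coprime alpha N /\
  forall j, coprime j N -> exists i, alpha ^ i = j %[mod N].

Definition alpha_pow (N alpha : nat) (i : int) : nat :=
  val ((alpha%:R : 'Z_N) ^ i)%R.

From HB Require Import structures.
From mathcomp Require Import all_boot all_order all_algebra all_fingroup all_solvable.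
Set Implicit Arguments. Unset Strict Implicit. Unset Printing Implicit Defensive.

(* The proof has three ingredients.
   1. Schur's multiplier lemma: if P is a unital partition of an abelian group
      G and m is prime to |G|, the image X^(m) of a block X is again a block.
      Block-constant N-valued functions on G are closed under convolution, so
      the number of ways of writing z as a product of q elements of a union of
      blocks Y is block-constant; for q prime, rotating the factors shows that
      this number is congruent mod q to the indicator of Y^(q) (Frobenius).
   2. Counting: the u blocks A^(alpha^v), v < u, are distinct and their union
      contains, with an element, all elements of G of the same order (these
      are its powers by alpha^t).  Hence u |A| = phi(p^b) p^e is a sum of
      distinct totients phi(p^r), which forces a single order class: every
      element of A has order p^(n-k), and n - k = b + e.
   3. Each a in A is y^(alpha^t) with u | t, i.e. y^(1 + c p^b) since
      alpha^u = 1 mod p^b; raising to m and comparing cardinalities gives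
      A^(m) = { y^(m + s p^b) | s < p^e } for every m prime to p, in
      particular for the representative of alpha^i. *)

Section Convolution.
Variable gT : finGroupType.

Definition conv (f g : gT -> nat) (z : gT) : nat :=
  \sum_(a : gT) f a * g (a^-1 * z)%g.

Lemma grp_coefE (B C : {set gT}) (z : gT) :
  grp_coef B C z = conv (fun a => a \in B) (fun a => a \in C) z.
Proof.
rewrite /grp_coef.
have -> : [set uv in setX B C | (uv.1 * uv.2)%g == z] =
          (fun a => (a, a^-1 * z)%g) @: [set a in B | (a^-1 * z)%g \in C].
  apply/setP => -[a c]; rewrite !inE /=; apply/idP/imsetP.
    by case/andP=> /andP[aB cC] /eqP <-; exists a; rewrite ?inE mulKg ?aB.
  by case=> a' /[!inE] /andP[a'B a'C] [-> ->]; rewrite a'B a'C mulKVg /=.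
rewrite card_imset => [|a a' [] //]; rewrite -sum1_card big_mkcond /=.
by apply: eq_bigr => a _; rewrite inE; case: (a \in B); case: (_ \in C).
Qed.

End Convolution.

Section BlockFunctions.
Variables (gT : finGroupType) (G : {group gT}) (P : {set {set gT}}).
Hypothesis partP : partition P G.

Lemma block_sub D : D \in P -> D \subset G.
Proof. by move=> DP; case/and3P: partP => /eqP <- _ _; apply: bigcup_sup. Qed.

Lemma block_uniq D E z : D \in P -> E \in P -> z \in D -> z \in E -> D = E.
Proof.
move=> DP EP zD zE; case/and3P: partP => _ tiP _.
by rewrite -(def_pblock tiP DP zD) (def_pblock tiP EP zE).
Qed.

Lemma block_exists z : z \in G -> exists2 D, D \in P & z \in D.
Proof.
move=> zG; case/and3P: partP => /eqP coverP _ _.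
by exists (pblock P z); [apply: pblock_mem | rewrite mem_pblock]; rewrite coverP.
Qed.

Lemma block_repr D : D \in P -> repr D \in D.
Proof.
move=> DP; case/and3P: partP => _ _ P0.
have /set0Pn[w wD] : D != set0 by apply: contraNneq P0 => <-.
exact: mem_repr wD.
Qed.

(* f lies in the Schur ring spanned by the blocks of P: it is supported on G
   and constant on each block. *)
Definition block_const (f : gT -> nat) : Prop :=
  (forall z, z \notin G -> f z = 0) /\
  forall D, D \in P -> {in D &, forall z z', f z = f z'}.

Lemma block_const_ext f g : f =1 g -> block_const f -> block_const g.
Proof.
move=> fg [f0 fD]; split=> [z zG|D DP z z' zD z'D]; rewrite -!fg.
  exact: f0.
exact: (fD D DP z z' zD z'D).
Qed.

Lemma block_const_expand f : block_const f ->
  forall a, f a = \sum_(D in P) f (repr D) * (a \in D).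
Proof.
move=> [f0 fD] a; have [aG|aG] := boolP (a \in G); last first.
  rewrite f0 // big1 // => D DP.
  by rewrite (negbTE (contra (subsetP (block_sub DP) a) aG)) muln0.
have [D DP aD] := block_exists aG.
rewrite (bigD1 D) //= big1 ?addn0 => [|E /andP[EP nED]].
  by rewrite aD muln1 (fD D DP _ _ aD (block_repr DP)).
have [aE|] := boolP (a \in E); last by rewrite muln0.
by rewrite (block_uniq EP DP aE aD) eqxx in nED.
Qed.

Lemma conv_expand f g : block_const f -> block_const g -> forall z,
  conv f g z = \sum_(D in P) \sum_(E in P) f (repr D) * g (repr E) * grp_coef D E z.
Proof.
move=> cf cg z; rewrite {1}/conv.
under [LHS]eq_bigr => a _ do rewrite (block_const_expand cf a)
  (block_const_expand cg (a^-1 * z)%g) big_distrl.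
rewrite exchange_big; apply: eq_bigr => D _ /=.
under eq_bigr => a _ do rewrite big_distrr.
rewrite exchange_big; apply: eq_bigr => E _ /=.
rewrite grp_coefE /conv big_distrr; apply: eq_bigr => a _ /=.
by rewrite mulnACA.
Qed.

(* Closure of the span of the block sums under multiplication in Z[G] means
   that every structure constant grp_coef B C is constant on blocks. *)
Hypothesis coef_const : forall B C D, B \in P -> C \in P -> D \in P ->
  {in D &, forall z z', grp_coef B C z = grp_coef B C z'}.

Lemma block_const_conv f g :
  block_const f -> block_const g -> block_const (conv f g).
Proof.
move=> cf cg; split=> [z zG|D DP z z' zD z'D].
  rewrite /conv big1 // => a _; have [aG|aG] := boolP (a \in G).
    by rewrite cg.1 ?muln0 //; apply: contra zG => azG; rewrite -(mulKVg a z) groupM.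
  by rewrite cf.1.
rewrite !conv_expand //; apply: eq_bigr => B BP; apply: eq_bigr => C CP.
by rewrite (coef_const BP CP DP zD z'D).
Qed.

End BlockFunctions.

Lemma unital_coef_const (gT : finGroupType) (G : {group gT}) P :
  unital_partition G P -> forall B C D, B \in P -> C \in P -> D \in P ->
  {in D &, forall z z', grp_coef B C z = grp_coef B C z'}.
Proof.
case=> partP _ closP B C D BP CP DP.
have [c coefE] := closP B C BP CP.
have coefD z : z \in D -> Posz (grp_coef B C z) = c D.
  move=> zD; rewrite coefE (bigD1 D) //= zD GRing.mulr1 big1 ?GRing.addr0 //.
  move=> E /andP[EP nED]; have [zE|] := boolP (z \in E); last by rewrite GRing.mulr0.
  by rewrite (block_uniq partP EP DP zE zD) eqxx in nED.
by move=> z z' zD z'D; apply/eqP; rewrite -eqz_nat coefD // coefD.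
Qed.

Section ProductCount.
Variables (gT : finGroupType) (Y : {set gT}).

(* The q-tuples of elements of Y with product z, and their number: the
   coefficient of z in the q-th power of the sum of Y in N[gT]. *)
Definition prod_tuples q z : {set {ffun 'I_q -> gT}} :=
  [set t : {ffun 'I_q -> gT} | [forall i, t i \in Y] && ((\prod_i t i)%g == z)].
Definition count_prod q z := #|prod_tuples q z|.

Definition ffun_cons q (a : gT) (t : {ffun 'I_q -> gT}) : {ffun 'I_q.+1 -> gT} :=
  [ffun i => if unlift ord0 i is Some j then t j else a].

Lemma ffun_cons0 q a (t : {ffun 'I_q -> gT}) : ffun_cons a t ord0 = a.
Proof. by rewrite ffunE unlift_none. Qed.

Lemma ffun_consS q a (t : {ffun 'I_q -> gT}) j : ffun_cons a t (lift ord0 j) = t j.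
Proof. by rewrite ffunE liftK. Qed.

Lemma count_prod0 z : count_prod 0 z = (z == 1%g).
Proof.
rewrite /count_prod; have [->|nz] := eqP.
  have -> : prod_tuples 0 1%g = setT.
    by apply/setP => t; rewrite !inE big_ord0 eqxx andbT; apply/forallP => -[].
  by rewrite cardsT card_ffun card_ord expn0.
apply/eqP; rewrite cards_eq0; apply/eqP/setP => t; rewrite !inE big_ord0.
by apply/negP => /andP[_ /eqP/esym].
Qed.

Lemma count_prodS q z :
  count_prod q.+1 z = conv (fun a => a \in Y) (count_prod q) z.
Proof.
rewrite /count_prod /conv -sum1_card.
rewrite (partition_big (fun t : {ffun 'I_q.+1 -> gT} => t ord0) predT) //=.
apply: eq_bigr => a _; have [aY|aY] := boolP (a \in Y); last first.
  rewrite mul0n big1 // => t /andP[/[!inE] /andP[/forallP tY _] /eqP ta].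
  by move: (tY ord0); rewrite ta (negbTE aY).
rewrite mul1n -sum1_card.
rewrite (reindex_onto (@ffun_cons q a) (fun t => [ffun j => t (lift ord0 j)])).
  apply: eq_bigl => t; rewrite !inE ffun_cons0 eqxx andbT big_ord_recl ffun_cons0.
  under eq_bigr do rewrite ffun_consS.
  have -> : [ffun j => ffun_cons a t (lift ord0 j)] = t.
    by apply/ffunP => j; rewrite ffunE ffun_consS.
  rewrite eqxx andbT; congr andb.
    apply/forallP/forallP => tY i; first by have := tY (lift ord0 i); rewrite ffun_consS.
    by case: (unliftP ord0 i) => [j ->|->]; rewrite ?ffun_consS ?ffun_cons0.
  by apply/eqP/eqP => [<-|->]; rewrite ?mulKg ?mulKVg.
move=> t /andP[_ /eqP ta]; apply/ffunP => i; rewrite ffunE.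
by case: (unliftP ord0 i) => [j ->|->]; rewrite ?liftK ?unlift_none ?ffunE.
Qed.

End ProductCount.

Section Rotation.
Variables (gT : finGroupType) (q : nat).

Definition perm_act (t : {ffun 'I_q -> gT}) (s : {perm 'I_q}) : {ffun 'I_q -> gT} :=
  [ffun i => t ((s^-1)%g i)].

Lemma perm_act1 : perm_act^~ 1%g =1 id.
Proof. by move=> t; apply/ffunP => i; rewrite ffunE invg1 perm1. Qed.

Lemma perm_actM t : act_morph perm_act t.
Proof. by move=> s s'; apply/ffunP => i; rewrite !ffunE invMg permM. Qed.

Definition perm_action := TotalAction perm_act1 perm_actM.

Definition rot_perm : {perm 'I_q} := perm (can_inj (@ordSK q)).

Lemma perm_act_rotV (t : {ffun 'I_q -> gT}) :
  perm_act t (rot_perm^-1)%g = [ffun i => t (ordS i)].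
Proof. by apply/ffunP => i; rewrite !ffunE invgK permE. Qed.

Lemma rot_permX : (rot_perm ^+ q = 1)%g.
Proof.
have iter_ordS m (i : 'I_q) : val (iter m (@ordS q) i) = (i + m) %% q.
  elim: m => [|m IHm] /=; first by rewrite addn0 modn_small.
  by rewrite IHm -addn1 modnDml -addnA addn1.
apply/permP => i; rewrite permX perm1; apply/val_inj.
rewrite (eq_iter (f' := @ordS q)) => [|j]; last by rewrite permE.
by rewrite iter_ordS modnDr modn_small.
Qed.

Lemma rot_invariant_const (t : 'I_q -> gT) :
  (forall i, t (ordS i) = t i) -> forall i j, t i = t j.
Proof.
case: q t => [t _ []//|q' t tS].
suff t0 i : t i = t ord0 by move=> i j; rewrite t0 (t0 j).
case: i => m; elim: m => [|m IHm] ltm; first by congr t; apply: val_inj.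
have ltm' : m < q'.+1 by apply: ltnW.
rewrite -(IHm ltm') -(tS (Ordinal ltm')); congr t; apply/val_inj.
by rewrite /= modn_small.
Qed.

End Rotation.

Section Frobenius.
Local Open Scope group_scope.
Variables (gT : finGroupType) (G : {group gT}) (Y : {set gT}) (q : nat).
Hypotheses (abG : abelian G) (YG : Y \subset G) (q_pr : prime q).

Local Notation rot := (perm_action gT q).

Lemma prod_rot (t : {ffun 'I_q -> gT}) : (forall i, t i \in G) ->
  \prod_i t (ordS i) = \prod_i t i.
Proof.
case: q t => [t _|q' t tG]; first by rewrite !big_ord0.
rewrite big_ord_recr big_ord_recl /=.
have -> : ordS ord_max = ord0 :> 'I_q'.+1 by apply/val_inj; rewrite /= modnn.
have -> : \prod_(i < q') t (ordS (widen_ord (leqnSn q') i)) =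
          \prod_(i < q') t (lift ord0 i).
  apply: eq_bigr => i _; congr (t _); apply/val_inj.
  by rewrite /= /bump /= add1n modn_small // ltnS.
apply: (centsP abG); [exact: group_prod | exact: tG].
Qed.

Lemma prod_ffun_const (c : gT) : \prod_(i < q) [ffun _ => c] i = c ^+ q.
Proof.
rewrite (eq_bigr (fun=> c)) => [|i _]; last by rewrite ffunE.
by rewrite prodg_const card_ord.
Qed.

Lemma rot_acts z : [acts <[(rot_perm q)^-1]>, on prod_tuples Y q z | rot].
Proof.
rewrite /= cycle_subG; apply/astabsP => t /=; rewrite perm_act_rotV !inE.
set r := [ffun i => t (ordS i)].
have -> : [forall i, r i \in Y] = [forall i, t i \in Y].
  apply/forallP/forallP => tY i; last by rewrite ffunE.
  by rewrite -(ord_predK i); move: (tY (ord_pred i)); rewrite ffunE.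
have [/forallP tY|] //= := boolP [forall i, t i \in Y].
under eq_bigr do rewrite ffunE.
by rewrite prod_rot // => i; apply: (subsetP YG).
Qed.

Lemma rot_fixed_tuples z :
  prod_tuples Y q z :&: 'Fix_rot[(rot_perm q)^-1] =
  (fun c => [ffun _ : 'I_q => c]) @: [set c in Y | c ^+ q == z].
Proof.
pose i0 := Ordinal (prime_gt0 q_pr).
apply/setP => t; rewrite inE; apply/andP/imsetP.
  case=> + /afix1P /= tfix; rewrite inE => /andP[/forallP tY /eqP tz].
  have tc i : t i = t i0.
    apply: (rot_invariant_const (t := t)) => j.
    by have := congr1 (fun f : {ffun 'I_q -> gT} => f j) tfix; rewrite perm_act_rotV ffunE.
  exists (t i0); last by apply/ffunP => i; rewrite ffunE tc.
  rewrite inE tY -tz -prod_ffun_const.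
  by apply/eqP/eq_bigr => i _; rewrite ffunE tc.
case=> c /[!inE] /andP[cY /eqP cz] ->; split.
  by rewrite prod_ffun_const cz eqxx andbT; apply/forallP => i; rewrite ffunE.
by rewrite sub1set inE /= perm_act_rotV; apply/eqP/ffunP => i; rewrite !ffunE.
Qed.

(* Frobenius' congruence: modulo q, the q-fold products only see the
   diagonal, by counting the fixed points of the rotation, of order q. *)
Lemma count_prod_mod z :
  count_prod Y q z = #|[set c in Y | c ^+ q == z]| %[mod q].
Proof.
have rot_qgroup : q.-group <[(rot_perm q)^-1]>.
  rewrite /pgroup -orderE; apply: pnat_dvd (pnat_id q_pr).
  by rewrite order_dvdn expgVn rot_permX invg1.
rewrite /count_prod (pgroup_fix_mod rot_qgroup (rot_acts z)) afix_cycle.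
rewrite rot_fixed_tuples card_imset // => c c' /ffunP /(_ (Ordinal (prime_gt0 q_pr))).
by rewrite !ffunE.
Qed.

End Frobenius.

Section Multipliers.
Variables (gT : finGroupType) (G : {group gT}) (P : {set {set gT}}).
Hypotheses (partP : partition P G) (oneP : [set 1%g] \in P) (abG : abelian G).
Hypothesis coef_const : forall B C D, B \in P -> C \in P -> D \in P ->
  {in D &, forall z z', grp_coef B C z = grp_coef B C z'}.

Definition block_union (Y : {set gT}) : Prop := block_const G P (fun a => a \in Y).

Lemma block_union_sub Y : block_union Y -> Y \subset G.
Proof.
by case=> Y0 _; apply/subsetP => a aY; apply: contraT => aG; have := Y0 a aG; rewrite aY.
Qed.

Lemma block_union_mem Y D z z' : block_union Y -> D \in P -> z \in D -> z' \in D ->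
  (z \in Y) = (z' \in Y).
Proof.
case=> _ YD DP zD z'D; move: (YD D DP z z' zD z'D).
by case: (z \in Y); case: (z' \in Y).
Qed.

Lemma block_union_block X : X \in P -> block_union X.
Proof.
move=> XP; split=> [z zG|D DP z z' zD z'D].
  by apply/eqP; rewrite eqb0; apply: contra zG; apply: subsetP (block_sub partP XP) z.
congr nat_of_bool; apply/idP/idP => [zX|z'X].
  by rewrite -(block_uniq partP DP XP zD zX).
by rewrite -(block_uniq partP DP XP z'D z'X).
Qed.

Lemma block_sub_union Y D z : block_union Y -> D \in P -> z \in D -> z \in Y ->
  D \subset Y.
Proof.
by move=> YP DP zD zY; apply/subsetP => w wD; rewrite (block_union_mem YP DP wD zD).
Qed.

Lemma count_prod_block_const Y q : block_union Y -> block_const G P (count_prod Y q).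
Proof.
move=> YP; elim: q => [|q IHq].
  apply: block_const_ext (fun z => z \in [set 1%g]) _ _ (block_union_block oneP).
  by move=> z; rewrite count_prod0 inE.
apply: block_const_ext (conv (fun a => a \in Y) (count_prod Y q)) _ _ _.
  by move=> z; rewrite count_prodS.
exact: block_const_conv.
Qed.

Lemma card_pow_fibre (Y : {set gT}) q z : Y \subset G -> coprime #|G| q ->
  #|[set c in Y | (c ^+ q == z)%g]| = (z \in set_pow Y q).
Proof.
move=> YG coq; have [/imsetP[c cY ->]|zYq] := boolP (z \in set_pow Y q).
  apply/eqP/cards1P; exists c; apply/setP => d; rewrite !inE.
  apply/andP/eqP => [[dY /eqP dc]|->]; last by rewrite cY eqxx.
  by apply: (can_in_inj (expgK coq)); rewrite ?(subsetP YG).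
apply/eqP; rewrite cards_eq0; apply/eqP/setP => d; rewrite !inE.
by apply/negP => /andP[dY /eqP dz]; case/negP: zYq; apply/imsetP; exists d.
Qed.

Lemma set_powM (Y : {set gT}) a b : set_pow Y (a * b) = set_pow (set_pow Y a) b.
Proof.
apply/setP => z; apply/imsetP/imsetP => [[c cY ->]|[w /imsetP[c cY ->] ->]].
  by exists (c ^+ a)%g; [apply/imsetP; exists c | rewrite expgM].
by exists c => //; rewrite expgM.
Qed.

Lemma set_pow1 (Y : {set gT}) : set_pow Y 1 = Y.
Proof.
apply/setP => z; apply/imsetP/idP => [[c cY ->]|zY]; first by rewrite expg1.
by exists z; rewrite ?expg1.
Qed.

(* Schur's multiplier lemma for a prime q, via Frobenius' congruence. *)
Lemma block_union_prime_pow (Y : {set gT}) q :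
  block_union Y -> prime q -> coprime #|G| q -> block_union (set_pow Y q).
Proof.
move=> YP q_pr coq; have YG := block_union_sub YP.
have indicator_mod w : nat_of_bool (w \in set_pow Y q) = count_prod Y q w %% q.
  rewrite (count_prod_mod abG YG q_pr) card_pow_fibre //.
  by case: (_ \in _); rewrite ?mod0n // modn_small // prime_gt1.
split=> [z zG|D DP z z' zD z'D].
  apply/eqP; rewrite eqb0; apply: contra zG => /imsetP[c cY ->].
  by rewrite groupX ?(subsetP YG).
by rewrite !indicator_mod ((count_prod_block_const q YP).2 D DP z z' zD z'D).
Qed.

Lemma block_union_pow (Y : {set gT}) m :
  block_union Y -> 0 < m -> coprime #|G| m -> block_union (set_pow Y m).
Proof.
move=> YP; elim/ltn_ind: m => m IHm m_gt0 com.
have [m_le1|m_gt1] := leqP m 1.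
  have -> : m = 1 by apply/eqP; rewrite eqn_leq m_le1 m_gt0.
  by rewrite set_pow1.
have [pr_q q_dvd] := (pdiv_prime m_gt1, pdiv_dvd m).
have mE : m = (m %/ pdiv m) * pdiv m by rewrite divnK.
rewrite mE set_powM; apply: (block_union_prime_pow _ pr_q (coprime_dvdr q_dvd com)).
apply: IHm; first by rewrite ltn_Pdiv // prime_gt1.
  by rewrite divn_gt0 ?prime_gt0 // dvdn_leq.
by apply: coprime_dvdr com; apply: dvdn_div.
Qed.

Lemma expg_inv_exponent m w : w \in G -> coprime #|G| m ->
  (w ^+ (m * m ^ (totient #|G|).-1))%g = w.
Proof.
move=> wG com; rewrite -expnS prednK ?totient_gt0 ?cardG_gt0 //.
rewrite -(expg_mod _ (expg_cardG wG)) Euler_exp_totient 1?coprime_sym //.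
by rewrite (expg_mod _ (expg_cardG wG)) expg1.
Qed.

Lemma block_pow X m : X \in P -> 0 < m -> coprime #|G| m -> set_pow X m \in P.
Proof.
move=> XP m_gt0 com; pose m' := (m ^ (totient #|G|).-1)%N.
have XG := block_sub partP XP; have xX := block_repr partP XP.
have Xm_union := block_union_pow (block_union_block XP) m_gt0 com.
have xmXm : (repr X ^+ m)%g \in set_pow X m by apply/imsetP; exists (repr X).
have [D DP xmD] := block_exists partP (subsetP (block_union_sub Xm_union) _ xmXm).
have DXm := block_sub_union Xm_union DP xmD xmXm.
(* conversely X is inside D^(m'), a union of blocks contained in X *)
have Dm'_union : block_union (set_pow D m').
  by apply: block_union_pow (block_union_block DP) _ _; rewrite ?expn_gt0 ?m_gt0 ?coprimeXr.
have Dm'X : set_pow D m' \subset X.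
  apply/subsetP => w /imsetP[d /(subsetP DXm) /imsetP[c cX ->] ->].
  by rewrite -expgM expg_inv_exponent // (subsetP XG).
have xDm' : (repr D ^+ m')%g \in set_pow D m'.
  by apply/imsetP; exists (repr D); rewrite ?(block_repr partP).
have XDm' := block_sub_union Dm'_union XP (subsetP Dm'X _ xDm') xDm'.
suff -> : set_pow X m = D by [].
apply/eqP; rewrite eq_sym eqEcard DXm /=.
apply: leq_trans (leq_imset_card _ _) (leq_trans (subset_leq_card XDm') _).
exact: leq_imset_card.
Qed.

End Multipliers.

(* A sum of distinct powers of p > 1 is a power of p only if it has a single
   term: base-p expansions are unique. *)
Lemma sum_distinct_powers p N s (c : pred nat) : 1 < p ->
  \sum_(r < N | c r) p ^ r = p ^ s -> forall r, r < N -> c r = (r == s).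
Proof.
move=> p_gt1 sumE.
have has_term : exists r, (r < N) && c r.
  have [r cr _] : exists2 r : 'I_N, c r & p ^ r != 0.
    apply/exists_inP; rewrite -negb_forall_in -sum_nat_eq0 sumE -lt0n.
    by rewrite expn_gt0 (ltnW p_gt1).
  by exists r; rewrite ltn_ord.
have [m /andP[mN cm] m_min] := ex_minnP has_term.
pose R := \sum_(r < N | c r && (r != m :> nat)) p ^ r.
have splitE : p ^ s = p ^ m + R.
  by rewrite -sumE (bigD1 (Ordinal mN)).
(* the remaining terms are all divisible by p ^ m.+1 *)
have dvd_R : p ^ m.+1 %| R.
  apply: dvdn_sum => r /andP[cr rm]; rewrite dvdn_Pexp2l // ltn_neqAle eq_sym rm.
  by rewrite m_min ?ltn_ord ?cr.
have R0 : R = 0.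
  apply/eqP; rewrite -leqn0 leqNgt; apply/negP => R_gt0.
  have ms : m < s by rewrite -(ltn_exp2l _ _ p_gt1) splitE -[X in X < _]addn0 ltn_add2l.
  have : p ^ m.+1 %| p ^ m by rewrite -(dvdn_addl _ dvd_R) -splitE dvdn_exp2l.
  by rewrite dvdn_Pexp2l // ltnn.
have ms : m = s by apply/eqP; rewrite -(eqn_exp2l _ _ p_gt1) splitE R0 addn0.
move=> r rN; apply/idP/eqP => [cr|->]; last by rewrite -ms.
rewrite -ms; apply/eqP/negPn/negP => rm.
have : 0 < R by rewrite /R (bigD1 (Ordinal rN)) /= ?cr ?rm // ltn_addr // expn_gt0 ltnW.
by rewrite R0.
Qed.

Lemma sum_totient_ppow p N b e (c : pred nat) : prime p -> odd p -> ~~ c 0 ->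
  \sum_(r < N | c r) totient (p ^ r) = totient (p ^ b) * p ^ e ->
  0 < b /\ (forall r, r < N -> c r = (r == b + e)).
Proof.
move=> p_pr p_odd c0 sumE; have p_gt1 := prime_gt1 p_pr.
have p1_gt0 : 0 < p.-1 by rewrite -ltnS prednK // ltnW.
have totE r : 0 < r -> p * totient (p ^ r) = p.-1 * p ^ r.
  by move=> r_gt0; rewrite totient_pfactor // mulnCA -expnS prednK.
have c_gt0 r : c r -> 0 < r by case: r => // c_0; rewrite c_0 in c0.
have b_gt0 : 0 < b.
  rewrite lt0n; apply: contraTneq p_odd => b0; rewrite -(prednK (ltnW p_gt1)) /=.
  have dvd_pe : p.-1 %| p ^ e.
    have -> : p ^ e = \sum_(r < N | c r) totient (p ^ r).
      by rewrite sumE b0 (_ : totient 1 = 1) ?mul1n.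
    apply: dvdn_sum => r /c_gt0 r_gt0.
    by rewrite totient_pfactor // dvdn_mulr.
  have := coprime_dvdr dvd_pe (coprimeXr e (coprimePn (ltnW p_gt1))).
  by rewrite /coprime gcdnn => /eqP ->.
split=> //; apply: sum_distinct_powers p_gt1 _.
apply/eqP; rewrite -(eqn_pmul2l p1_gt0) big_distrr /=; apply/eqP.
rewrite (eq_bigr (fun r : 'I_N => p * totient (p ^ r))) => [|r /c_gt0 r_gt0]; last first.
  by rewrite totE.
by rewrite -big_distrr /= sumE mulnA totE // expnD mulnA.
Qed.

Definition order_class (gT : finGroupType) (G : {set gT}) (d : nat) : {set gT} :=
  [set w in G | #[w]%g == d].

Lemma in_order_class (gT : finGroupType) (G : {set gT}) d w :
  (w \in order_class G d) = (w \in G) && (#[w]%g == d).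
Proof. by rewrite inE. Qed.

Section CyclicOrders.
Variables (gT : finGroupType) (G : {group gT}).
Hypothesis cycG : cyclic G.
Local Open Scope group_scope.

Lemma same_order_cycle a w : a \in G -> w \in G -> #[a] = #[w] -> <[a]> = <[w]>.
Proof.
move=> aG wG oaw; apply/eqP.
by rewrite (eq_subG_cyclic cycG) ?cycle_subG // -!orderE oaw.
Qed.

Lemma card_order_class t : t \in G -> #|order_class G #[t]| = totient #[t].
Proof.
move=> tG; rewrite totient_gen; apply: eq_card => w; rewrite !inE.
apply/andP/idP => [[wG /eqP owt]|/eqP tw].
  by rewrite /generator (same_order_cycle tG wG).
have wt : w \in <[t]> by rewrite tw cycle_id.
by rewrite (subsetP _ _ wt) ?cycle_subG //= [#[w]]/order -tw.
Qed.

End CyclicOrders.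

Section CyclicPGroup.
Variables (gT : finGroupType) (G : {group gT}) (p n alpha : nat).
Hypotheses (p_pr : prime p) (cycG : cyclic G) (oG : #|G| = p ^ n).
Hypothesis alpha_gen : generates_units (p ^ n) alpha.
Local Open Scope group_scope.

Lemma order_ppow a : a \in G -> exists2 m, m <= n & #[a] = (p ^ m)%N.
Proof.
move=> aG; have : #[a] %| (p ^ n)%N by rewrite -oG order_dvdG.
by case/(dvdn_pfactor _ _ p_pr) => m le_mn ->; exists m.
Qed.

(* The elements of G of the order of a are the a^(alpha^t): alpha generates
   the units modulo p^n, hence modulo #[a]. *)
Lemma same_order_alpha_pow a w : a \in G -> w \in G -> #[a] = #[w] ->
  exists t, w = a ^+ (alpha ^ t)%N.
Proof.
move=> aG wG oaw; have [m le_mn oa] := order_ppow aG.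
have [m0|m_gt0] := posnP m.
  have a1 : a = 1 by apply/eqP; rewrite -order_eq1 oa m0.
  have w1 : w = 1 by apply/eqP; rewrite -order_eq1 -oaw oa m0.
  by exists 0; rewrite a1 w1 expg1n.
have gen_w : generator <[a]> w by rewrite /generator (same_order_cycle cycG aG wG oaw).
have /cycleP[j wE] := cycle_generator gen_w.
move: gen_w; rewrite wE generator_coprime oa coprime_pexpl // => co_pj.
have [_ /(_ j) [|t alpha_tj]] := alpha_gen; first by apply: coprimeXr; rewrite coprime_sym.
exists t; apply/eqP; rewrite eq_expg_mod_order oa.
have dvd_pmn : (p ^ m %| p ^ n)%N by apply: dvdn_exp2l.
by rewrite -(modn_dvdm j dvd_pmn) -alpha_tj modn_dvdm.
Qed.

End CyclicPGroup.

Section Main.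
Variables (gT : finGroupType) (G : {group gT}) (p n : nat) (P : {set {set gT}}).
Variables (alpha k : nat) (A : {set gT}) (x : gT) (u b e : nat).
Hypotheses (p_pr : prime p) (p_odd : odd p) (cycG : cyclic G) (oG : #|G| = p ^ n).
Hypotheses (partP : partition P G) (oneP : [set 1%g] \in P).
Hypothesis coef_const : forall B C D, B \in P -> C \in P -> D \in P ->
  {in D &, forall z z', grp_coef B C z = grp_coef B C z'}.
Hypotheses (alpha_gen : generates_units (p ^ n) alpha) (lt_kn : k < n).
Hypotheses (AP : A \in P) (oA : #|A| = p ^ e) (gen_x : generator G x).
Hypothesis yA : (x ^+ (p ^ k))%g \in A.
Hypotheses (u_gt0 : 0 < u) (yuA : ((x ^+ (p ^ k)) ^+ (alpha ^ u))%g \in A).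
Hypothesis u_min : forall v, 0 < v < u -> ((x ^+ (p ^ k)) ^+ (alpha ^ v))%g \notin A.
Hypothesis u_totient : u = totient (p ^ b).

Local Notation y := (x ^+ (p ^ k))%g.

Let abG : abelian G := cyclic_abelian cycG.
Let p_gt1 : 1 < p := prime_gt1 p_pr.

Lemma coprime_alpha_pow w : coprime #|G| (alpha ^ w).
Proof. by case: alpha_gen => co_alpha _; rewrite coprimeXr // oG coprime_sym. Qed.

Lemma alpha_pow_gt0 w : 0 < alpha ^ w.
Proof.
rewrite expn_gt0 lt0n; apply/orP; left; apply/eqP => alpha0.
have := coprime_alpha_pow 1.
rewrite alpha0 /coprime gcdn0 oG -(expn0 p) eqn_exp2l // => /eqP n0.
by move: lt_kn; rewrite n0.
Qed.

Lemma pow_inj m : coprime #|G| m -> {in G &, injective (fun z => z ^+ m)%g}.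
Proof. by move=> com; apply: can_in_inj (expgK com). Qed.

Lemma A_sub : A \subset G.
Proof. by apply: (block_sub partP). Qed.

Lemma order_y : #[y]%g = p ^ (n - k).
Proof.
have ox : #[x]%g = p ^ n by rewrite -oG (eqP gen_x).
have le_kn := ltnW lt_kn.
by rewrite orderXdiv ox ?dvdn_exp2l // expnB ?prime_gt0.
Qed.

Lemma one_notin_A : 1%g \notin A.
Proof.
apply/negP => A1; move: yA; rewrite (block_uniq partP AP oneP A1 (set11 _)) inE.
move=> /eqP y1; have := order_y; rewrite y1 order1 => /esym/eqP.
by rewrite -(expn0 p) eqn_exp2l // subn_eq0 leqNgt lt_kn.
Qed.

Lemma alpha_block w : set_pow A (alpha ^ w) \in P.
Proof.
exact: (block_pow partP oneP abG coef_const AP (alpha_pow_gt0 w) (coprime_alpha_pow w)).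
Qed.

Lemma mem_alpha_block w z : z \in A -> (z ^+ (alpha ^ w))%g \in set_pow A (alpha ^ w).
Proof. by move=> zA; apply/imsetP; exists z. Qed.

Lemma alpha_block_mod w : set_pow A (alpha ^ w) = set_pow A (alpha ^ (w %% u)).
Proof.
have Au : set_pow A (alpha ^ u) = A.
  exact: (block_uniq partP (alpha_block u) AP (mem_alpha_block u yA) yuA).
have Aqu q : set_pow A (alpha ^ (q * u)) = A.
  by elim: q => [|q IHq]; rewrite ?set_pow1 // mulSn expnD mulnC set_powM IHq Au.
by rewrite {1}(divn_eq w u) expnD set_powM Aqu.
Qed.

Lemma alpha_block_fixed w : (set_pow A (alpha ^ w) == A) = (u %| w).
Proof.
rewrite alpha_block_mod /dvdn; have [->|v_neq0] := eqVneq (w %% u) 0.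
  by rewrite expn0 set_pow1 eqxx.
apply/negbTE/eqP => Av.
have := u_min (v := w %% u); rewrite lt0n v_neq0 ltn_mod u_gt0 => /(_ isT) /negP; apply.
by rewrite -Av mem_alpha_block.
Qed.

Lemma mem_alpha_pow z w : z \in A -> ((z ^+ (alpha ^ w))%g \in A) = (u %| w).
Proof.
move=> zA; rewrite -alpha_block_fixed.
apply/idP/eqP => [zwA|<-]; last exact: mem_alpha_block.
exact: (block_uniq partP (alpha_block w) AP (mem_alpha_block w zA) zwA).
Qed.

Definition alpha_orbit : {set gT} :=
  (fun va : 'I_u * gT => va.2 ^+ (alpha ^ va.1))%g @: setX [set: 'I_u] A.

Lemma alpha_orbit_inj v v' a a' : v <= v' < u -> a \in A -> a' \in A ->
  (a ^+ (alpha ^ v) = a' ^+ (alpha ^ v'))%g -> v = v' /\ a = a'.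
Proof.
move=> /andP[le_vv' lt_v'u] aA a'A eq_aa'.
have aG := subsetP A_sub a aA; have a'G := subsetP A_sub a' a'A.
have aE : a = (a' ^+ (alpha ^ (v' - v)))%g.
  apply: (pow_inj (coprime_alpha_pow v)) => //; first by rewrite groupX.
  by rewrite /= eq_aa' -expgM -expnD subnK.
have : u %| v' - v by rewrite -(mem_alpha_pow _ a'A) -aE.
have [v'v|] := posnP (v' - v); last first.
  by move=> /dvdn_leq /[apply]; rewrite leqNgt (leq_ltn_trans (leq_subr v v') lt_v'u).
split; first by apply/eqP; rewrite eqn_leq le_vv' -subn_eq0 v'v.
by rewrite aE v'v expn0 expg1.
Qed.

Lemma card_alpha_orbit : #|alpha_orbit| = u * #|A|.
Proof.
rewrite card_in_imset ?cardsX ?cardsT ?card_ord // => -[v a] [v' a'].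
rewrite !inE /= => aA a'A eq_aa'.
have [le_vv'|lt_v'v] := leqP v v'.
  have lt_vv'u : v <= v' < u by rewrite le_vv' ltn_ord.
  by have [/val_inj -> ->] := alpha_orbit_inj lt_vv'u aA a'A eq_aa'.
have lt_v'vu : v' <= v < u by rewrite (ltnW lt_v'v) ltn_ord.
by have [/val_inj -> ->] := alpha_orbit_inj lt_v'vu a'A aA (esym eq_aa').
Qed.

Lemma alpha_orbit_sub : alpha_orbit \subset G.
Proof.
by apply/subsetP => _ /imsetP[[v a] /[!inE] /= aA ->]; rewrite groupX ?(subsetP A_sub).
Qed.

Lemma one_notin_alpha_orbit : 1%g \notin alpha_orbit.
Proof.
apply/negP => /imsetP[[v a] /[!inE] /= aA a1].
have aG := subsetP A_sub a aA.
have : a = 1%g by apply: (pow_inj (coprime_alpha_pow v)); rewrite /= ?expg1n.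
by move=> a_eq1; move: aA; rewrite a_eq1 (negbTE one_notin_A).
Qed.

Lemma A_sub_alpha_orbit : A \subset alpha_orbit.
Proof.
apply/subsetP => a aA; apply/imsetP; exists (Ordinal u_gt0, a); first by rewrite !inE aA.
by rewrite /= expn0 expg1.
Qed.

Lemma alpha_orbit_order_closed t w : t \in alpha_orbit -> w \in G -> #[w]%g = #[t]%g ->
  w \in alpha_orbit.
Proof.
case/imsetP => -[v a] /[!inE] /= aA -> wG ow.
have aG := subsetP A_sub a aA; have atG : (a ^+ (alpha ^ v))%g \in G by rewrite groupX.
have [s ->] := same_order_alpha_pow p_pr cycG oG alpha_gen atG wG (esym ow).
rewrite -expgM -expnD (divn_eq (v + s) u) expnD expgM.
apply/imsetP.
exists (Ordinal (ltn_pmod (v + s) u_gt0), a ^+ (alpha ^ ((v + s) %/ u * u)))%g => //.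
by rewrite !inE /= mem_alpha_pow // dvdn_mull.
Qed.

Lemma alpha_orbit_class r : alpha_orbit :&: order_class G (p ^ r) != set0 ->
  #|alpha_orbit :&: order_class G (p ^ r)| = totient (p ^ r).
Proof.
case/set0Pn => t /setIP[tT /setIdP[tG /eqP ot]].
have class_sub : order_class G (p ^ r) \subset alpha_orbit.
  apply/subsetP => w /setIdP[wG /eqP ow].
  by apply: alpha_orbit_order_closed tT wG _; rewrite ow ot.
by rewrite (setIidPr class_sub) -ot (card_order_class cycG tG).
Qed.

Lemma card_alpha_orbit_classes : #|alpha_orbit| =
  \sum_(r < n.+1 | alpha_orbit :&: order_class G (p ^ r) != set0) totient (p ^ r).
Proof.
have -> : #|alpha_orbit| = \sum_(r < n.+1) #|alpha_orbit :&: order_class G (p ^ r)|.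
  rewrite -sum1_card (partition_big (fun w => inord (logn p #[w]%g) : 'I_n.+1) predT) //=.
  apply: eq_big => // r _; rewrite -sum1_card; apply: eq_bigl => w.
  rewrite !inE; have [wT|] //= := boolP (w \in alpha_orbit).
  have wG := subsetP alpha_orbit_sub w wT; have [m le_mn ->] := order_ppow p_pr oG wG.
  by rewrite wG pfactorK // eqn_exp2l // -val_eqE /= inordK.
rewrite [RHS]big_mkcond /=; apply: eq_bigr => r _.
by case: ifP => [/alpha_orbit_class //|/negbFE/eqP ->]; rewrite cards0.
Qed.

Lemma A_order_structure :
  [/\ 0 < b, A \subset order_class G (p ^ (n - k)) & n - k = b + e].
Proof.
pose c r := alpha_orbit :&: order_class G (p ^ r) != set0.
have c0 : ~~ c 0.
  apply/set0Pn => -[w /setIP[wT /setIdP[_ /eqP]]]; rewrite expn0 => /eqP.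
  by rewrite order_eq1 => /eqP w1; move: wT; rewrite w1 (negbTE one_notin_alpha_orbit).
have [|b_gt0 cE] := sum_totient_ppow p_pr p_odd c0 (N := n.+1) (b := b) (e := e).
  by rewrite -card_alpha_orbit_classes card_alpha_orbit oA u_totient.
have c_order a : a \in alpha_orbit -> a \in order_class G (p ^ (b + e)).
  move=> aT; have aG := subsetP alpha_orbit_sub a aT.
  have [r le_rn ar] := order_ppow p_pr oG aG.
  have : c r by apply/set0Pn; exists a; rewrite inE in_order_class aT aG ar /=.
  by rewrite cE ?ltnS // => /eqP <-; rewrite in_order_class aG ar /=.
have nkE : n - k = b + e.
  have := c_order y (subsetP A_sub_alpha_orbit y yA).
  rewrite in_order_class order_y (subsetP A_sub y yA) /=.
  by rewrite eqn_exp2l // => /eqP.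
split=> //; apply/subsetP => a aA; rewrite nkE.
exact: c_order (subsetP A_sub_alpha_orbit a aA).
Qed.

(* Every element of A is y^(1 + c p^b): it is y^(alpha^t) with u | t, and
   alpha^u = 1 mod p^b by Euler's theorem. *)
Lemma A_elements a : a \in A -> exists c, a = (y ^+ (1 + c * p ^ b))%g.
Proof.
move=> aA; have [b_gt0 A_class _] := A_order_structure.
have /setIdP[aG /eqP oa] := subsetP A_class a aA.
have yG := subsetP A_sub y yA.
have [t aE] := same_order_alpha_pow p_pr cycG oG alpha_gen yG aG (etrans order_y (esym oa)).
have [q tE] : exists q, t = q * u by apply/dvdnP; rewrite -(mem_alpha_pow t yA) -aE.
have co_alpha_p : coprime alpha p.
  case: alpha_gen => co_alpha _; apply: coprime_dvdr co_alpha.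
  by rewrite -[p in p %| _]expn1 dvdn_exp2l // (leq_ltn_trans _ lt_kn).
have pb_gt1 : 1 < p ^ b by rewrite -[1](expn0 p) ltn_exp2l.
have alpha_t : alpha ^ t %% p ^ b = 1.
  rewrite tE mulnC expnM -modnXm u_totient Euler_exp_totient ?coprimeXr //.
  by rewrite modnXm exp1n modn_small.
by exists (alpha ^ t %/ p ^ b); rewrite aE {1}(divn_eq (alpha ^ t) (p ^ b)) alpha_t addnC.
Qed.

Lemma set_pow_A m : coprime m p ->
  set_pow A m = [set (x ^+ (p ^ k * (m + s * p ^ b)))%g | s : 'I_(p ^ (n - k - b))].
Proof.
move=> co_mp; have [b_gt0 _ nkE] := A_order_structure.
have -> : n - k - b = e by rewrite nkE addKn.
have co_Gm : coprime #|G| m by rewrite oG coprime_sym coprimeXr.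
apply/eqP; rewrite eqEcard; apply/andP; split; last first.
  rewrite /set_pow [X in _ <= X]card_in_imset => [|a a' aA a'A]; last first.
    by apply: (pow_inj co_Gm); apply: (subsetP A_sub).
  by rewrite oA -[X in _ <= X]card_ord leq_imset_card.
apply/subsetP => _ /imsetP[a /A_elements[c ->] ->].
have se_lt : (m * c) %% p ^ e < p ^ e by rewrite ltn_mod expn_gt0 prime_gt0.
apply/imsetP; exists (Ordinal se_lt) => //=; rewrite -!expgM; apply/eqP.
have ox : #[x]%g = p ^ k * (p ^ e * p ^ b).
  by rewrite -!expnD [e + b]addnC -nkE subnKC ?(ltnW lt_kn) // -oG (eqP gen_x).
rewrite eq_expg_mod_order ox -!muln_modr eqn_pmul2l ?expn_gt0 ?prime_gt0 //.
by rewrite mulnDl mul1n mulnAC [c * m]mulnC muln_modl modnDmr.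
Qed.

End Main.

Lemma alpha_pow_coprime p n alpha (i : int) : prime p -> 0 < n ->
  coprime alpha (p ^ n) -> coprime (alpha_pow (p ^ n) alpha i) p.
Proof.
move=> p_pr n_gt0 co_alpha.
have pn_gt1 : 1 < p ^ n by rewrite -[1](expn0 p) ltn_exp2l ?prime_gt1.
have unit_alpha : ((alpha%:R : 'Z_(p ^ n)) ^ i)%R \is a GRing.unit.
  by apply: unitrXz; rewrite unitZpE // coprime_sym.
by rewrite -(coprime_pexpr _ _ n_gt0) coprime_sym -unitZpE // /alpha_pow natr_Zp.
Qed.

Unset Implicit Arguments. Set Strict Implicit.

Theorem mainTheorem12 (gT : finGroupType) (G : {group gT}) (p n : nat)
    (P : {set {set gT}}) (alpha : nat) (k : nat) (A : {set gT}) (x : gT)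
    (u b : nat) :
  prime p -> odd p -> 0 < n ->
  cyclic G -> #|G| = p ^ n ->
  unital_partition G P -> cond_p p P ->
  generates_units (p ^ n) alpha ->
  k < n ->
  A \in Pset G P p k ->
  generator G x -> (x ^+ (p ^ k))%g \in A ->
  (* u = u_k: the smallest positive integer with y^(alpha^u) in A, y = x^(p^k) *)
  0 < u -> ((x ^+ (p ^ k)) ^+ (alpha ^ u))%g \in A ->
  (forall v, 0 < v < u -> ((x ^+ (p ^ k)) ^+ (alpha ^ v))%g \notin A) ->
  u = totient (p ^ b) ->
  forall i : int,
    set_pow A (alpha_pow (p ^ n) alpha i) =
    [set (x ^+ (p ^ k * (alpha_pow (p ^ n) alpha i + s * p ^ b)))%g
       | s : 'I_(p ^ (n - k - b))].
Proof.
move=> p_pr p_odd n_gt0 cycG oG unP condp alpha_gen lt_kn APk gen_x yA u_gt0 yuA u_min ub i.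
have [partP oneP _] := unP.
have AP : A \in P by move: APk; rewrite inE => /andP[].
have [e oA] := condp A AP.
apply: (set_pow_A p_pr p_odd cycG oG partP oneP (unital_coef_const unP) alpha_gen lt_kn
          AP oA gen_x yA u_gt0 yuA u_min ub).
by apply: alpha_pow_coprime => //; case: alpha_gen.
Qed.
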